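(* Let $\mathbf a=(a_1,\ldots,a_n)\in\mathbb Z_{\geq1}^n$ and $\mathbf b=(b_1,\ldots,b_m)\in\mathbb Z_{\geq1}^m$. If $(\mathbf x,\mathbf y)$, with $\mathbf x=(x_1,\ldots,x_n)$ and $\mathbf y=(y_1,\ldots,y_m)$, is a minimal solution of the equation $x_1a_1+\cdots+x_na_n=y_1b_1+\cdots+y_mb_m$, then there exist rational numbers $\lambda_{i,j}$ ($1\leq i\leq n$, $1\leq j\leq m$) such that $\sum_{j=1}^m \lambda_{i,j} b_j=x_i$ for $1\leq i\leq n$; $\sum_{i=1}^n \lambda_{i,j} a_i=y_j$ for $1\leq j\leq m$; $\sum_{i=1}^n\sum_{j=1}^m\lambda_{i,j}\leq 1$; and $\lambda_{i,j}\geq 0$ for all $1\leq i\leq n$, $1\leq j\leq m$.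
   Context: $\mathcal S(\mathbf a,\mathbf b)$ denotes the set of all pairs $(\mathbf x,\mathbf y)\in\mathbb Z_{\geq0}^n\times\mathbb Z_{\geq0}^m$ satisfying $\sum_i x_ia_i=\sum_j y_jb_j$. A solution in $\mathcal S(\mathbf a,\mathbf b)$ is called minimal if it is nonzero and cannot be written as the sum of two nonzero solutions in $\mathcal S(\mathbf a,\mathbf b)$; the set of minimal solutions is denoted $\mathcal H(\mathbf a,\mathbf b)$ (the Hilbert basis of the cone $\{(\mathbf x,\mathbf y)\in\mathbb R_{\geq0}^{n+m}:\mathbf a\cdot\mathbf x=\mathbf b\cdot\mathbf y\}$). *)

From mathcomp Require Import all_boot all_order all_algebra.
Set Implicit Arguments. Unset Strict Implicit. Unset Printing Implicit Defensive.

Definition is_solution (n m : nat) (a : 'I_n -> nat) (b : 'I_m -> nat)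
    (x : 'I_n -> nat) (y : 'I_m -> nat) : Prop :=
  (\sum_(i < n) x i * a i = \sum_(j < m) y j * b j)%N.

Definition is_nonzero (n m : nat) (x : 'I_n -> nat) (y : 'I_m -> nat) : Prop :=
  (exists i, x i <> 0%N) \/ (exists j, y j <> 0%N).

Definition is_minimal_solution (n m : nat) (a : 'I_n -> nat) (b : 'I_m -> nat)
    (x : 'I_n -> nat) (y : 'I_m -> nat) : Prop :=
  is_solution a b x y /\ is_nonzero x y /\
  ~ (exists (x1 x2 : 'I_n -> nat) (y1 y2 : 'I_m -> nat),
       is_solution a b x1 y1 /\ is_nonzero x1 y1 /\
       is_solution a b x2 y2 /\ is_nonzero x2 y2 /\
       (forall i, x i = x1 i + x2 i)%N /\ (forall j, y j = y1 j + y2 j)%N).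

From mathcomp Require Import all_boot all_order all_algebra.
From mathcomp Require Import zify ring.
Import Order.TTheory GRing.Theory Num.Theory.

Set Implicit Arguments.
Unset Strict Implicit.
Unset Printing Implicit Defensive.

(* Take lam i j := x_i y_j / S, where S = sum_i x_i a_i = sum_j y_j b_j; everything
   except the bound on the total mass is immediate, and that bound says
   (sum_i x_i) (sum_j y_j) <= S.  Write the a's as a word of X = sum_i x_i letters and
   the b's as a word of Y = sum_j y_j letters, both of weight S, with prefix sums
   P_0 < ... < P_(X-1) < S and Q_0 < ... < Q_(Y-1) < S.  The X Y residues P_k - Q_l
   modulo S are pairwise distinct: a coincidence would give a nonempty proper window of
   the a-word with the same weight as a (possibly cyclically wrapping) window of the
   b-word, i.e. a nonzero proper sub-solution, which minimality forbids. *)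

Section CountSums.
Variable T : finType.

Lemma sum_count_mem_mul (w : T -> nat) (s : seq T) :
  \sum_(i : T) count_mem i s * w i = \sum_(v <- s) w v.
Proof.
transitivity (\sum_(v <- s) \sum_(i | i == v) w i); last first.
  by apply: eq_bigr => v _; rewrite big_pred1_eq.
rewrite (exchange_big_dep xpredT) //=; apply: eq_bigr => i _.
rewrite big_const_seq iter_addn_0 mulnC; congr (_ * _).
by apply: eq_count => v; rewrite /= eq_sym.
Qed.

Lemma sum_count_mem (s : seq T) : \sum_(i : T) count_mem i s = size s.
Proof.
rewrite -sum1_size -(sum_count_mem_mul (fun=> 1)).
by apply: eq_bigr => i _; rewrite muln1.
Qed.

Definition seq_of_counts (c : T -> nat) : seq T :=
  flatten [seq nseq (c i) i | i <- index_enum T].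

Lemma count_seq_of_counts c i : count_mem i (seq_of_counts c) = c i.
Proof.
rewrite count_flatten sumnE !big_map (bigD1 i) //= !count_nseq /=.
rewrite (eqxx i) mul1n big1 ?addn0 // => j /negbTE.
by rewrite count_nseq /= => ->.
Qed.

Lemma size_seq_of_counts c : size (seq_of_counts c) = \sum_(i : T) c i.
Proof. by rewrite -sum_count_mem; apply: eq_bigr => i _; rewrite count_seq_of_counts. Qed.

Lemma sum_seq_of_counts (w c : T -> nat) :
  \sum_(v <- seq_of_counts c) w v = \sum_(i : T) c i * w i.
Proof. by rewrite -sum_count_mem_mul; apply: eq_bigr => i _; rewrite count_seq_of_counts. Qed.

Lemma subseq_count_mem_eq (s s' : seq T) :
  subseq s s' -> (forall i, count_mem i s = count_mem i s') -> s = s'.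
Proof.
move=> sub_s eq_s; apply/eqP; rewrite -(size_subseq_leqif sub_s).2.
by rewrite -!sum_count_mem; apply/eqP/eq_bigr => i _; rewrite eq_s.
Qed.

End CountSums.

Lemma eq_modn_lt_double d u v : u < d.*2 -> v < d.*2 -> u = v %[mod d] ->
  [\/ u = v, u = v + d | v = u + d].
Proof.
move=> hu hv e.
have d_gt0 : 0 < d by lia.
have : u %/ d < 2 by rewrite ltn_divLR // mul2n.
have : v %/ d < 2 by rewrite ltn_divLR // mul2n.
have := divn_eq u d; have := divn_eq v d; rewrite e.
move: (u %/ d) (v %/ d) (v %% d) => [|[|?]] [|[|?]] r // -> -> _ _;
  [apply: Or31 | apply: Or33 | apply: Or32 | apply: Or31]; lia.
Qed.

Section PrefixSums.
Variables (T : Type) (w : T -> nat).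
Hypothesis w_gt0 : forall v, 0 < w v.

Definition prefix_sum (s : seq T) k := \sum_(v <- take k s) w v.

Lemma leq_size_sum (s : seq T) : size s <= \sum_(v <- s) w v.
Proof. by rewrite -sum1_size; apply: leq_sum. Qed.

Lemma prefix_sum_slice s k k' : k <= k' ->
  prefix_sum s k' = prefix_sum s k + \sum_(v <- drop k (take k' s)) w v.
Proof.
by move=> le_kk'; rewrite /prefix_sum -{1}(cat_take_drop k (take k' s)) big_cat take_takel.
Qed.

Lemma prefix_sum_size s : prefix_sum s (size s) = \sum_(v <- s) w v.
Proof. by rewrite /prefix_sum take_size. Qed.

Lemma ltn_prefix_sum s k k' : k <= size s -> k' <= size s ->
  (prefix_sum s k < prefix_sum s k') = (k < k').
Proof.
move=> ks k's; case: (ltnP k k') => [lt_kk'|le_k'k].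
  rewrite (prefix_sum_slice s (ltnW lt_kk')) -addn1 leq_add2l.
  apply: leq_trans (leq_size_sum _); rewrite size_drop size_takel //; lia.
by rewrite (prefix_sum_slice s le_k'k) ltnNge leq_addr.
Qed.

Lemma prefix_sum_lt_sum s k : k < size s -> prefix_sum s k < \sum_(v <- s) w v.
Proof. by move=> ks; rewrite -prefix_sum_size ltn_prefix_sum // ltnW. Qed.

Lemma prefix_sum_inj s k k' : k <= size s -> k' <= size s ->
  prefix_sum s k = prefix_sum s k' -> k = k'.
Proof.
move=> ks k's eq_P; case: (ltngtP k k') => // [lt_kk'|lt_k'k].
- by move: lt_kk'; rewrite -(ltn_prefix_sum ks k's) eq_P ltnn.
- by move: lt_k'k; rewrite -(ltn_prefix_sum k's ks) eq_P ltnn.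
Qed.

End PrefixSums.

Section MinimalSolution.
Variables (n m : nat) (a : 'I_n -> nat) (b : 'I_m -> nat).
Variables (x : 'I_n -> nat) (y : 'I_m -> nat).
Hypothesis xy_min : is_minimal_solution a b x y.

Lemma minimal_solution_sub u w :
  is_solution a b u w -> (forall i, u i <= x i) -> (forall j, w j <= y j) ->
  is_nonzero u w -> u =1 x /\ w =1 y.
Proof.
move=> uw_sol le_ux le_wy uw_nz; have [xy_sol [_ no_split]] := xy_min.
have rest_sol : is_solution a b (fun i => x i - u i) (fun j => y j - w j).
  have split_sum k (c c' : 'I_k -> nat) (e : 'I_k -> nat) : (forall i, c' i <= c i) ->
      \sum_(i < k) c i * e i = \sum_(i < k) c' i * e i + \sum_(i < k) (c i - c' i) * e i.
    by move=> le_c'c; rewrite -big_split; apply: eq_bigr => i _ /=; rewrite -mulnDl subnKC.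
  move: xy_sol; rewrite /is_solution (split_sum _ _ _ _ le_ux) (split_sum _ _ _ _ le_wy).
  by rewrite uw_sol => /addnI.
have rest_zero : ~ is_nonzero (fun i => x i - u i) (fun j => y j - w j).
  move=> rest_nz; apply: no_split; exists u, (fun i => x i - u i), w, (fun j => y j - w j).
  by do 4!split => //; split=> ? /=; rewrite subnKC.
split=> [i|j]; apply/eqP; rewrite eqn_leq ?le_ux ?le_wy -subn_eq0;
  apply/negPn/negP => /eqP ne0; apply: rest_zero.
- by left; exists i.
- by right; exists j.
Qed.

Variables (sa : seq 'I_n) (sb : seq 'I_m).
Hypotheses (count_sa : forall i, count_mem i sa = x i)
           (count_sb : forall j, count_mem j sb = y j).

Lemma minimal_solution_subseq u w : subseq u sa -> subseq w sb ->
  \sum_(v <- u) a v = \sum_(v <- w) b v -> 0 < size u + size w -> u = sa /\ w = sb.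
Proof.
move=> sub_u sub_w uw_sum uw_gt0.
have [eq_u eq_w] : (fun i => count_mem i u) =1 x /\ (fun j => count_mem j w) =1 y.
  apply: minimal_solution_sub => [|i|j|].
  - by rewrite /is_solution !sum_count_mem_mul.
  - by rewrite -count_sa leq_count_subseq.
  - by rewrite -count_sb leq_count_subseq.
  - case: u {sub_u uw_sum} uw_gt0 => [|i u] /=; last by left; exists i; rewrite (eqxx i).
    by case: w {sub_w} => // j w _; right; exists j; rewrite /= (eqxx j).
by split; apply: subseq_count_mem_eq => // i; rewrite ?count_sa ?count_sb;
  [apply: eq_u | apply: eq_w].
Qed.

Hypotheses (a_gt0 : forall i, 0 < a i) (b_gt0 : forall j, 0 < b j).

Local Notation P := (prefix_sum a sa).
Local Notation Q := (prefix_sum b sb).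
Local Notation S := (\sum_(v <- sa) a v).

Lemma weight_sb : \sum_(v <- sb) b v = S.
Proof.
rewrite -(sum_count_mem_mul b sb) -(sum_count_mem_mul a sa).
under eq_bigr do rewrite count_sb; under [in RHS]eq_bigr do rewrite count_sa.
by case: xy_min => ->.
Qed.

Lemma proper_window_unbalanced k k' w : k < k' -> k' < size sa -> subseq w sb ->
  P k + \sum_(v <- w) b v != P k'.
Proof.
move=> lt_kk' k's sub_w; apply/eqP => eq_P.
pose u := drop k (take k' sa).
have size_u : size u = k' - k by rewrite size_drop size_takel // ltnW.
have [u_sa _] : u = sa /\ w = sb.
  apply: minimal_solution_subseq => //.
  - exact: subseq_trans (drop_subseq _ _) (take_subseq _ _).
  - by move: eq_P; rewrite (prefix_sum_slice _ _ (ltnW lt_kk')) => /addnI.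
  - by rewrite size_u; lia.
by move: size_u; rewrite u_sa; lia.
Qed.

Lemma prefix_sums_eq_mod k k' l l' :
  k <= k' -> k' < size sa -> l < size sb -> l' < size sb ->
  P k + Q l' = P k' + Q l %[mod S] -> k = k' /\ l = l'.
Proof.
move=> le_kk' k's ls l's eq_mod.
have ltP k0 k1 : k0 <= size sa -> k1 <= size sa -> (P k0 < P k1) = (k0 < k1).
  exact: ltn_prefix_sum.
have ltQ l0 l1 : l0 <= size sb -> l1 <= size sb -> (Q l0 < Q l1) = (l0 < l1).
  exact: ltn_prefix_sum.
have PS := prefix_sum_lt_sum a_gt0 k's.
have le_P : P k <= P k' by rewrite leqNgt ltP -?leqNgt //; lia.
have QlS := prefix_sum_lt_sum b_gt0 ls; have Ql'S := prefix_sum_lt_sum b_gt0 l's.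
rewrite weight_sb in QlS Ql'S.
have [||eq_PQ|eq_PQ|eq_PQ] := eq_modn_lt_double _ _ eq_mod;
  [lia | lia | | lia |]; last first.
- (* the b-window wraps around the end of sb *)
  have lt_kk' : k < k' by rewrite -ltP; lia.
  have lt_l'l : l' < l by rewrite -ltQ; lia.
  have [] := negP (proper_window_unbalanced lt_kk' k's (w := take l' sb ++ drop l sb) _).
    rewrite -[X in subseq _ X](cat_take_drop l sb); apply: cat_subseq (subseq_refl _).
    by rewrite -(take_takel _ (ltnW lt_l'l)) take_subseq.
  have : Q l + \sum_(v <- drop l sb) b v = S.
    by rewrite -weight_sb /prefix_sum -big_cat cat_take_drop.
  rewrite big_cat /= -/(prefix_sum b sb l'); lia.
have [eq_kk'|ne_kk'] := eqVneq k k'.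
  subst k'; split=> //; apply: (prefix_sum_inj b_gt0 (ltnW ls) (ltnW l's)); lia.
have lt_kk' : k < k' by rewrite ltn_neqAle ne_kk'.
have lt_ll' : l < l' by rewrite -ltQ; have := ltP k k'; lia.
have [] := negP (proper_window_unbalanced lt_kk' k's (w := drop l (take l' sb)) _).
  exact: subseq_trans (drop_subseq _ _) (take_subseq _ _).
move: eq_PQ; rewrite (prefix_sum_slice b sb (ltnW lt_ll')) addnCA [P k' + _]addnC.
by move=> /addnI ->.
Qed.

Lemma size_mul_leq_weight : size sa * size sb <= S.
Proof.
have [->|sa_gt0] := posnP (size sa); first by [].
have S_gt0 : 0 < S := leq_trans sa_gt0 (leq_size_sum a_gt0 sa).
(* adding S first keeps the truncated subtraction exact *)
pose f (kl : 'I_(size sa) * 'I_(size sb)) : 'I_S :=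
  Ordinal (ltn_pmod (P kl.1 + S - Q kl.2) S_gt0).
suff f_inj : injective f by have := leq_card f f_inj; rewrite card_prod !card_ord.
move=> [k l] [k' l'] /(congr1 val) /= eq_f.
have QlS := prefix_sum_lt_sum b_gt0 (ltn_ord l).
have Ql'S := prefix_sum_lt_sum b_gt0 (ltn_ord l'); rewrite weight_sb in QlS Ql'S.
have eq_mod : P k + Q l' = P k' + Q l %[mod S].
  move: (congr1 (fun r => (r + (Q l + Q l')) %% S) eq_f); rewrite /= !modnDml.
  rewrite (_ : P k + S - Q l + _ = P k + Q l' + S); last by lia.
  by rewrite (_ : P k' + S - Q l' + _ = P k' + Q l + S) ?modnDr //; lia.
have [le_kk'|lt_k'k] := leqP k k'.
  have [eq_k eq_l] := prefix_sums_eq_mod le_kk' (ltn_ord k') (ltn_ord l) (ltn_ord l') eq_mod.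
  by congr pair; apply: val_inj.
have [eq_k eq_l] :=
  prefix_sums_eq_mod (ltnW lt_k'k) (ltn_ord k) (ltn_ord l') (ltn_ord l) (esym eq_mod).
by congr pair; apply: val_inj.
Qed.

End MinimalSolution.

Lemma minimal_solution_size_mul n m (a : 'I_n -> nat) (b : 'I_m -> nat) x y :
  (forall i, 0 < a i) -> (forall j, 0 < b j) -> is_minimal_solution a b x y ->
  (\sum_(i < n) x i) * (\sum_(j < m) y j) <= \sum_(i < n) x i * a i.
Proof.
move=> a_gt0 b_gt0 xy_min.
rewrite -(sum_seq_of_counts a x) -(size_seq_of_counts x) -(size_seq_of_counts y).
by apply: (size_mul_leq_weight xy_min) => //; apply: count_seq_of_counts.
Qed.

Lemma solution_weight_gt0 n m (a : 'I_n -> nat) (b : 'I_m -> nat) x y :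
  (forall i, 0 < a i) -> (forall j, 0 < b j) ->
  is_solution a b x y -> is_nonzero x y -> 0 < \sum_(i < n) x i * a i.
Proof.
move=> a_gt0 b_gt0 xy_sol [[i /eqP xi]|[j /eqP yj]].
- by rewrite (bigD1 i) //= ltn_addr // muln_gt0 lt0n xi a_gt0.
- by rewrite xy_sol (bigD1 j) //= ltn_addr // muln_gt0 lt0n yj b_gt0.
Qed.

Local Open Scope ring_scope.

Lemma sum_mul_div_dot (F : fieldType) (I : finType) (c d : F) (u v : I -> F) :
  d != 0 -> \sum_(i : I) u i * v i = d -> \sum_(i : I) c * u i / d * v i = c.
Proof.
move=> d_neq0 uv_d; rewrite (eq_bigr (fun i => c / d * (u i * v i))) => [|i _].
  by rewrite -mulr_sumr uv_d divfK.
by ring.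
Qed.

Theorem theorem1 (n m : nat) (a : 'I_n -> nat) (b : 'I_m -> nat)
    (Ha : forall i, (1 <= a i)%N) (Hb : forall j, (1 <= b j)%N)
    (x : 'I_n -> nat) (y : 'I_m -> nat) :
  is_minimal_solution a b x y ->
  exists lam : 'I_n -> 'I_m -> rat,
    (forall i, \sum_(j < m) lam i j * (b j)%:R = (x i)%:R) /\
    (forall j, \sum_(i < n) lam i j * (a i)%:R = (y j)%:R) /\
    \sum_(i < n) \sum_(j < m) lam i j <= 1 /\
    (forall i j, 0 <= lam i j).
Proof.
move=> xy_min; have [xy_sol [xy_nz _]] := xy_min.
set S := (\sum_(i < n) x i * a i)%N.
have S_gt0 : (0 < S)%N := solution_weight_gt0 Ha Hb xy_sol xy_nz.
have S_neq0 : (S%:R : rat) != 0 by rewrite pnatr_eq0 -lt0n.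
exists (fun i j => (x i)%:R * (y j)%:R / S%:R); split; [|split; [|split]].
- move=> i; apply: sum_mul_div_dot => //.
  by rewrite /S xy_sol natr_sum; apply: eq_bigr => j _; rewrite natrM.
- move=> j; under eq_bigr do rewrite [_ * (y j)%:R]mulrC.
  apply: sum_mul_div_dot => //.
  by rewrite /S natr_sum; apply: eq_bigr => i _; rewrite natrM.
- under eq_bigr do rewrite -mulr_suml.
  rewrite -mulr_suml -big_distrlr /= -!natr_sum -natrM ler_pdivrMr ?ltr0n //.
  by rewrite mul1r ler_nat (minimal_solution_size_mul Ha Hb xy_min).
- by move=> i j; rewrite divr_ge0 ?mulr_ge0 ?ler0n.
Qed.
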